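(* For every $n\geq 1$, $$P_n(a_1,\dots,a_n;x_1,\dots,x_n) = \frac{1}{\prod_{i=1}^n x_i}\sum_{\sigma\in S_n}\frac{\exp\big(\sum_{i<j} w_{\sigma(i)\sigma(j)}\big)}{\prod_{j=1}^{n-1} u_{\sigma(j)\sigma(j+1)}},$$ where $w_{jk}:=(a_jx_k-a_kx_j)/2$ and $u_{jk}:=a_j/x_j-a_k/x_k$ (an identity of meromorphic functions of $a_1,\dots,a_n,x_1,\dots,x_n$).
   Context: Let $\zeta(x) := e^{x/2}-e^{-x/2}$. Define $P_1(a_1;x_1):=1/x_1$ and, for $n\geq 2$, $$P_n(a_1,\dots,a_n;x_1,\dots,x_n) := \sum_{\substack{\tau\in S_n\\ \tau(1)=1}} \frac{\prod_{j=2}^{n-1} x_{\tau(j)} \prod_{j=1}^{n-1}\zeta\Big(\big(\sum_{k=1}^{j} a_{\tau(k)}\big)x_{\tau(j+1)} - a_{\tau(j+1)}\big(\sum_{k=1}^{j} x_{\tau(k)}\big)\Big)}{\prod_{j=1}^{n-1}\big(a_{\tau(j)}x_{\tau(j+1)} - a_{\tau(j+1)}x_{\tau(j)}\big)}.$$ *)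

From HB Require Import structures.
From mathcomp Require Import all_boot all_order all_algebra all_fingroup.
From mathcomp Require Import all_classical all_reals all_analysis.
Set Implicit Arguments. Unset Strict Implicit. Unset Printing Implicit Defensive.
Import Order.TTheory GRing.Theory Num.Theory.
Local Open Scope ring_scope.

Definition zeta {R : realType} (x : R) : R := expR (x / 2) - expR (- (x / 2)).

(* P_{n+1}(a_1..a_{n+1}; x_1..x_{n+1}), indices shifted to 0..n.
   tau(1)=1 becomes tau ord0 = ord0; t k := tau(k) for k a nat < n+1. *)
Definition Pn {R : realType} (n : nat) (a x : 'I_n.+1 -> R) : R :=
  match n with
  | 0 => (x ord0)^-1
  | _ =>
    \sum_(tau : 'S_n.+1 | tau ord0 == ord0)
      let t := fun k : nat => tau (inord k) in
      (\prod_(1 <= j < n) x (t j)) *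
      (\prod_(0 <= j < n)
          zeta ((\sum_(0 <= k < j.+1) a (t k)) * x (t j.+1)
                - a (t j.+1) * (\sum_(0 <= k < j.+1) x (t k)))) /
      (\prod_(0 <= j < n) (a (t j) * x (t j.+1) - a (t j.+1) * x (t j)))
  end.

Definition wjk {R : realType} (n : nat) (a x : 'I_n.+1 -> R) (j k : 'I_n.+1) : R :=
  (a j * x k - a k * x j) / 2.

Definition ujk {R : realType} (n : nat) (a x : 'I_n.+1 -> R) (j k : 'I_n.+1) : R :=
  a j / x j - a k / x k.

Definition Prop31_rhs {R : realType} (n : nat) (a x : 'I_n.+1 -> R) : R :=
  (\prod_(i < n.+1) x i)^-1 *
  \sum_(sigma : 'S_n.+1)
     expR (\sum_(i < n.+1) \sum_(j < n.+1 | (i < j)%N) wjk a x (sigma i) (sigma j)) /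
     (\prod_(0 <= j < n) ujk a x (sigma (inord j)) (sigma (inord j.+1))).

(* Put alpha_i := a_i / x_i, so that u_jk = alpha_j - alpha_k and
   a_j x_k - a_k x_j = (alpha_j - alpha_k) x_j x_k.  Up to the common factor
   1 / prod_i x_i, the right-hand side is a sum over all orderings of the indices
   of exp(energy) / (product of consecutive alpha-differences), and the left-hand
   side is a sum over the orderings starting with 1 of a product of zeta's over
   the same kind of differences.  Cutting an ordering at the position of 1 turns
   the right-hand side into a sum over the splittings (L, R) of the other indices.
   With 1 replaced by an arbitrary virtual element (p, q) and its slope by an
   arbitrary z, this sum obeys the recursion of the left-hand side: the next
   index is the head of L or of R, the two cases carry the factors -e^(-w) and
   e^w adding up to zeta, and they recombine by the partial fraction identity
   1/((z-u)(z-v)) = (1/(z-u) - 1/(z-v))/(u-v).  Only e(u+v) = e(u) e(v) is used,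
   and alpha may be any injective function. *)

From HB Require Import structures.
From mathcomp Require Import all_boot all_order all_algebra all_fingroup.
From mathcomp Require Import all_classical all_reals all_analysis.
From mathcomp Require Import ring.
Import Order.TTheory GRing.Theory Num.Theory.
Local Open Scope ring_scope.

Set Implicit Arguments. Unset Strict Implicit. Unset Printing Implicit Defensive.

Section Splittings.
Variables (V : nmodType) (T : eqType).
Implicit Types (c : T) (s t L R : seq T).

Lemma big_permutations_cons s (G : seq T -> V) : uniq s -> s != [::] ->
  \sum_(t <- permutations s) G t = \sum_(c <- s) \sum_(t <- permutations (rem c s)) G (c :: t).
Proof.
move=> s_uniq s_nil; rewrite -size_eq0 -lt0n in s_nil.
by rewrite (perm_big _ (permutationsE s_nil)) big_allpairs_dep undup_id.
Qed.

Lemma big_permutations_head c s (G : seq T -> V) : uniq (c :: s) ->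
  \sum_(t <- permutations (c :: s) | head c t == c) G t = \sum_(t <- permutations s) G (c :: t).
Proof.
move=> cs_uniq; have /andP[cs _] := cs_uniq.
rewrite big_mkcond [LHS]big_permutations_cons //= big_cons !eqxx.
rewrite [X in _ + X]big1_seq ?addr0 // => d /andP[_ ds].
by apply: big1 => t _; rewrite ifN //; apply: contraNneq cs => <-.
Qed.

Definition splits s : seq (seq T * seq T) :=
  [seq (take k t, drop k t) | t <- permutations s, k <- iota 0 (size s).+1].

Lemma mem_splits s p : (p \in splits s) = perm_eq (p.1 ++ p.2) s.
Proof.
case: p => L R /=; apply/idP/idP => [/allpairsP[[t k] /= [+ _ [-> ->]]] | LRs].
  by rewrite cat_take_drop mem_permutations.
apply/allpairsP; exists (L ++ R, size L); rewrite /= take_size_cat ?drop_size_cat //.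
split; rewrite ?mem_permutations // -[_ :: _]/(iota 0 (size s).+1).
by rewrite mem_iota ltnS -(perm_size LRs) size_cat leq_addr.
Qed.

Lemma splits_uniq s : uniq (splits s).
Proof.
apply: allpairs_uniq; rewrite ?permutations_uniq ?iota_uniq //.
move=> _ _ /allpairsP[[u i] [pu ki ->]] /allpairsP[[u' i'] [pu' ki' ->]] [eL eR] /=.
have size_take_split v j : v \in permutations s -> j \in iota 0 (size s).+1 -> size (take j v) = j.
  by rewrite mem_permutations mem_iota ltnS => /perm_size <- /size_takel.
congr pair; first by rewrite -(cat_take_drop i u) eL eR cat_take_drop.
by rewrite -(size_take_split u i) // -(size_take_split u' i') // eL.
Qed.

Lemma big_splits_reindex s (f : seq T * seq T -> seq T * seq T) (F : seq T * seq T -> V) :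
  injective f -> (forall L R, perm_eq ((f (L, R)).1 ++ (f (L, R)).2) (L ++ R)) ->
  \sum_(p <- splits s) F (f p) = \sum_(p <- splits s) F p.
Proof.
move=> f_inj f_perm; rewrite -(big_map f xpredT); apply: perm_big.
have f_uniq : uniq (map f (splits s)) by rewrite map_inj_uniq ?splits_uniq.
have f_sub : {subset map f (splits s) <= splits s}.
  move=> _ /mapP[[L R] + ->]; case: (f (L, R)) (f_perm L R) => L' R' /= LR'.
  by rewrite !mem_splits (permPl LR').
have [_ f_eq] := uniq_min_size f_uniq f_sub (eq_leq (esym (size_map f _))).
by apply: uniq_perm; rewrite ?splits_uniq.
Qed.

Lemma big_splits_swap s (F : seq T * seq T -> V) :
  \sum_(p <- splits s) F (p.2, p.1) = \sum_(p <- splits s) F p.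
Proof.
apply: big_splits_reindex => [[L R] [L' R'] [-> ->] //|L R].
by rewrite perm_catC.
Qed.

Lemma big_splits_revl s (F : seq T * seq T -> V) :
  \sum_(p <- splits s) F (rev p.1, p.2) = \sum_(p <- splits s) F p.
Proof.
apply: big_splits_reindex => [[L R] [L' R'] [/(can_inj revK)-> ->] //|L R].
by rewrite perm_cat2r perm_rev.
Qed.

Lemma big_splits_consl s (G : T -> seq T * seq T -> V) : uniq s ->
  \sum_(p <- splits s) (if p.1 is c :: L then G c (L, p.2) else 0) =
  \sum_(c <- s) \sum_(p <- splits (rem c s)) G c p.
Proof.
case: s => [|c0 s0] s_uniq; first by rewrite /splits /= big_seq1 big_nil.
rewrite /splits big_allpairs_dep big_permutations_cons //; apply: eq_big_seq => c cs.
rewrite big_allpairs_dep size_rem //; apply: eq_bigr => t _.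
by rewrite -[iota 0 (size _).+1]/(index_iota 0 (size s0).+2) big_nat_recl //= add0r.
Qed.

Lemma big_splits_consr s (G : T -> seq T * seq T -> V) : uniq s ->
  \sum_(p <- splits s) (if p.2 is c :: R then G c (p.1, R) else 0) =
  \sum_(c <- s) \sum_(p <- splits (rem c s)) G c p.
Proof.
move=> s_uniq; rewrite -big_splits_swap (big_splits_consl (fun c p => G c (p.2, p.1))) //.
by apply: eq_bigr => c _; rewrite (big_splits_swap _ (G c)).
Qed.

Lemma big_permutations_insert c s (F : seq T -> V) : c \notin s ->
  \sum_(t <- permutations (c :: s)) F t = \sum_(p <- splits s) F (p.1 ++ c :: p.2).
Proof.
move=> cs; rewrite -(big_map (fun p => p.1 ++ c :: p.2) xpredT); apply: perm_big.
apply: uniq_perm; rewrite ?permutations_uniq //.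
  rewrite map_inj_in_uniq ?splits_uniq // => -[L R] [L' R'].
  rewrite !mem_splits /= => LR LR' /eqP e.
  have c_notin L1 R1 : perm_eq (L1 ++ R1) s -> c \notin L1.
    by move=> LR1; apply: contra cs; rewrite -(perm_mem LR1) mem_cat => ->.
  have sizeL : size L = size L'.
    move/eqP: e => /(congr1 (index c)); rewrite !index_cat.
    by rewrite (negPf (c_notin _ _ LR)) (negPf (c_notin _ _ LR')) /= eqxx !addn0.
  by move: e; rewrite eqseq_cat // => /andP[/eqP-> /eqP[->]].
move=> t; rewrite mem_permutations; apply/idP/mapP => [pt | [[L R] + ->]].
  have ct : c \in t by rewrite (perm_mem pt) mem_head.
  case/splitPr: ct pt => L R pt.
  exists (L, R) => //; rewrite mem_splits /= -(perm_cons c).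
  by rewrite -(perm_catCA L [:: c] R).
by rewrite (mem_splits s (L, R)) /= => LR; rewrite (perm_catCA L [:: c] R) perm_cons.
Qed.

End Splittings.

Section Energy.
Variables (F : fieldType) (T : eqType) (a x : T -> F).
Implicit Types (c : T) (s L R : seq T) (p q : F).

Definition wedge (p q p' q' : F) : F := (p * q' - p' * q) / 2.

Fixpoint energy s : F :=
  if s is c :: s' then \sum_(d <- s') wedge (a c) (x c) (a d) (x d) + energy s' else 0.

(* The energy of [rev L ++ o :: R] for a virtual element [o] with [a o = p] and
   [x o = q], see [energy_rev_cat]. *)
Definition energy_at p q L R : F :=
  let aL := \sum_(c <- L) a c in let xL := \sum_(c <- L) x c in
  let aR := \sum_(c <- R) a c in let xR := \sum_(c <- R) x c in
  energy (rev L) + energy R + wedge aL xL p q + wedge p q aR xR + wedge aL xL aR xR.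

Lemma sum_wedge p q s :
  \sum_(d <- s) wedge p q (a d) (x d) = wedge p q (\sum_(d <- s) a d) (\sum_(d <- s) x d).
Proof. by rewrite /wedge -big_distrl sumrB !mulr_sumr -mulr_suml. Qed.

Lemma energy_cat s1 s2 : energy (s1 ++ s2) = energy s1 + energy s2 +
  wedge (\sum_(c <- s1) a c) (\sum_(c <- s1) x c) (\sum_(c <- s2) a c) (\sum_(c <- s2) x c).
Proof.
elim: s1 => [|c s1 IH] /=; first by rewrite !big_nil /wedge; ring.
by rewrite !sum_wedge IH !big_cat !big_cons /wedge /=; ring.
Qed.

Lemma energy_rev_cat L c R : energy (rev L ++ c :: R) = energy_at (a c) (x c) L R.
Proof. by rewrite energy_cat /= sum_wedge /energy_at !big_cons !big_rev /wedge; ring. Qed.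

Lemma energy_at_consl p q l L R :
  energy_at p q (l :: L) R = energy_at (p + a l) (q + x l) L R - wedge p q (a l) (x l).
Proof.
by rewrite /energy_at rev_cons -cats1 energy_cat /= !big_cons !big_nil !big_rev /wedge; ring.
Qed.

Lemma energy_at_consr p q L r R :
  energy_at p q L (r :: R) = energy_at (p + a r) (q + x r) L R + wedge p q (a r) (x r).
Proof. by rewrite /energy_at /= sum_wedge !big_cons /wedge; ring. Qed.

Lemma energy_nth c0 s : energy s = \sum_(0 <= i < size s) \sum_(0 <= j < size s | (i < j)%N)
  wedge (a (nth c0 s i)) (x (nth c0 s i)) (a (nth c0 s j)) (x (nth c0 s j)).
Proof.
elim: s => [|c s IH]; first by rewrite big_geq.
rewrite [size _]/= big_nat_recl //= IH; congr (_ + _).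
  by rewrite [RHS]big_mkcond big_nat_recl //= add0r (big_nth c0).
apply: eq_big_nat => i _; rewrite big_mkcond [RHS]big_mkcond big_nat_recl //= add0r.
by apply: eq_big_nat.
Qed.

End Energy.

Section Chains.
Variables (F : fieldType) (T : eqType) (alpha : T -> F).
Implicit Types (z : F) (c : T) (s L R : seq T).

Fixpoint chain_from z s : F :=
  if s is c :: s' then (z - alpha c) * chain_from (alpha c) s' else 1.

Definition chain s : F := if s is c :: s' then chain_from (alpha c) s' else 1.

Lemma chain_from_neq0 z s : injective alpha -> uniq s -> z \notin map alpha s ->
  chain_from z s != 0.
Proof.
move=> alpha_inj; elim: s z => [|c s IH] z /=; first by rewrite oner_neq0.
rewrite inE negb_or => /andP[cs s_uniq] /andP[zc zs].
by rewrite mulf_neq0 ?subr_eq0 // IH ?(mem_map alpha_inj).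
Qed.

Lemma chain_rev_cat L c R :
  chain (rev L ++ c :: R) = (-1) ^+ size L * chain_from (alpha c) L * chain_from (alpha c) R.
Proof.
elim: L c R => [|l L IH] c R /=; first by rewrite expr0 !mul1r.
by rewrite rev_cons cat_rcons IH /= exprS; ring.
Qed.

Lemma chain_nth c0 s :
  chain s = \prod_(0 <= j < (size s).-1) (alpha (nth c0 s j) - alpha (nth c0 s j.+1)).
Proof.
elim: s => [|c s IH]; first by rewrite big_geq.
case: s IH => [|d s] /= IH; first by rewrite big_geq.
by rewrite big_nat_recl // IH.
Qed.

Lemma chain_from_partial_fraction z L R :
  injective alpha -> uniq (L ++ R) -> z \notin map alpha (L ++ R) -> L ++ R != [::] ->
  (chain_from z L * chain_from z R)^-1 =
    (if L is l :: _ then (chain_from z L * chain_from (alpha l) R)^-1 else 0) +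
    (if R is r :: _ then (chain_from (alpha r) L * chain_from z R)^-1 else 0).
Proof.
move=> alpha_inj; case: L R => [|l L] [|r R] //= LR_uniq zLR _; rewrite ?addr0 ?add0r //.
have zl : z - alpha l != 0 by rewrite subr_eq0; apply: contraNneq zLR => ->; rewrite mem_head.
have zr : z - alpha r != 0.
  rewrite subr_eq0; apply: contraNneq zLR => ->.
  by rewrite inE map_f ?orbT // mem_cat mem_head orbT.
move: LR_uniq; rewrite mem_cat inE cat_uniq /= !negb_or.
move=> /andP[/and3P[lL lr _] /and3P[L_uniq _ /andP[rR R_uniq]]].
have cl : chain_from (alpha l) L != 0 by rewrite chain_from_neq0 ?(mem_map alpha_inj).
have cr : chain_from (alpha r) R != 0 by rewrite chain_from_neq0 ?(mem_map alpha_inj).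
have alr : alpha l - alpha r != 0 by rewrite subr_eq0 (inj_eq alpha_inj).
have arl : alpha r - alpha l != 0 by rewrite subr_eq0 (inj_eq alpha_inj) eq_sym.
by field; rewrite cl cr zl zr alr arl.
Qed.

End Chains.

Section Identity.
Variables (F : fieldType) (T : eqType) (e : F -> F).
Hypothesis eD : {morph e : u v / u + v >-> u * v}.
Hypothesis e_neq0 : forall u, e u != 0.
Variables (a x alpha : T -> F).
Hypothesis alpha_inj : injective alpha.
Implicit Types (p q z : F) (c : T) (s L R : seq T).

Definition zeta_of (y : F) : F := e (y / 2) - e (- (y / 2)).

Fixpoint zeta_prod p q s : F :=
  if s is c :: s' then zeta_of (p * x c - a c * q) * zeta_prod (p + a c) (q + x c) s' else 1.

Definition split_term p q z (LR : seq T * seq T) : F :=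
  e (energy_at a x p q LR.1 LR.2) /
  ((-1) ^+ size LR.1 * chain_from alpha z LR.1 * chain_from alpha z LR.2).

Lemma split_term_peell p q z l L R :
  - e (- wedge p q (a l) (x l)) / (z - alpha l) * split_term (p + a l) (q + x l) (alpha l) (L, R) =
  e (energy_at a x p q (l :: L) R) /
    ((-1) ^+ size (l :: L) * chain_from alpha z (l :: L) * chain_from alpha (alpha l) R).
Proof.
by rewrite /split_term energy_at_consl eD /= exprS !invfM invrN1; ring.
Qed.

Lemma split_term_peelr p q z L r R :
  e (wedge p q (a r) (x r)) / (z - alpha r) * split_term (p + a r) (q + x r) (alpha r) (L, R) =
  e (energy_at a x p q L (r :: R)) /
    ((-1) ^+ size L * chain_from alpha (alpha r) L * chain_from alpha z (r :: R)).
Proof. by rewrite /split_term energy_at_consr eD /= !invfM; ring. Qed.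

Lemma split_term_split p q z L R :
  uniq (L ++ R) -> z \notin map alpha (L ++ R) -> L ++ R != [::] ->
  split_term p q z (L, R) =
    (if L is l :: L' then
       - e (- wedge p q (a l) (x l)) / (z - alpha l) *
         split_term (p + a l) (q + x l) (alpha l) (L', R)
     else 0) +
    (if R is r :: R' then
       e (wedge p q (a r) (x r)) / (z - alpha r) *
         split_term (p + a r) (q + x r) (alpha r) (L, R')
     else 0).
Proof.
move=> LR_uniq zLR LR_nil.
have -> : split_term p q z (L, R) = e (energy_at a x p q L R) / (-1) ^+ size L *
    (chain_from alpha z L * chain_from alpha z R)^-1.
  by rewrite /split_term -mulrA invfM mulrA.
rewrite chain_from_partial_fraction // mulrDr.
by case: L {LR_uniq zLR LR_nil} => [|l L]; case: R => [|r R];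
  rewrite ?split_term_peell ?split_term_peelr ?mulr0 /= -?mulrA ?invfM.
Qed.

Lemma sum_zeta_prod s p q z : uniq s -> z \notin map alpha s ->
  \sum_(t <- permutations s) zeta_prod p q t / chain_from alpha z t =
  \sum_(LR <- splits s) split_term p q z LR.
Proof.
have [n] := ubnP (size s); elim: n => // n IH in s p q z *.
move=> size_s s_uniq zs; have [-> | s_nil] := eqVneq s [::].
  rewrite /splits /= !big_seq1 /split_term /= divr1.
  have -> : energy_at a x p q [::] [::] = 0 by rewrite /energy_at !big_nil /wedge /=; ring.
  have e0 : e 0 = 1 by apply: (mulfI (e_neq0 0)); rewrite -eD !addr0 mulr1.
  by rewrite e0 expr0 !mul1r invr1.
rewrite big_permutations_cons //.
transitivity (\sum_(c <- s) zeta_of (p * x c - a c * q) / (z - alpha c) *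
    \sum_(LR <- splits (rem c s)) split_term (p + a c) (q + x c) (alpha c) LR).
  apply: eq_big_seq => c cs.
  have c_rem : c \notin rem c s by rewrite mem_rem_uniqF.
  rewrite -IH ?rem_uniq ?(mem_map alpha_inj) // ?mulr_sumr.
    by apply: eq_bigr => t _ /=; rewrite invfM; ring.
  by rewrite size_rem // -ltnS prednK // lt0n size_eq0.
pose Gl c LR := - e (- wedge p q (a c) (x c)) / (z - alpha c) *
  split_term (p + a c) (q + x c) (alpha c) LR.
pose Gr c LR := e (wedge p q (a c) (x c)) / (z - alpha c) *
  split_term (p + a c) (q + x c) (alpha c) LR.
have split_eq : {in splits s, forall LR, split_term p q z LR =
    (if LR.1 is l :: L then Gl l (L, LR.2) else 0) +
    (if LR.2 is r :: R then Gr r (LR.1, R) else 0)}.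
  move=> [L R]; rewrite mem_splits /= => LRs; apply: split_term_split.
  - by rewrite (perm_uniq LRs).
  - by rewrite (perm_mem (perm_map alpha LRs)).
  - by rewrite -size_eq0 (perm_size LRs) size_eq0.
rewrite (eq_big_seq _ split_eq) big_split big_splits_consl // big_splits_consr //.
rewrite -big_split; apply: eq_bigr => c _ /=.
rewrite /Gl /Gr -!mulr_sumr -mulrDl /zeta_of /wedge.
by congr (_ * _); ring.
Qed.

Lemma sum_energy_insert c s : c \notin s ->
  \sum_(t <- permutations (c :: s)) e (energy a x t) / chain alpha t =
  \sum_(LR <- splits s) split_term (a c) (x c) (alpha c) LR.
Proof.
move=> cs; rewrite big_permutations_insert // -[LHS]big_splits_revl.
by apply: eq_bigr => -[L R] _; rewrite /= energy_rev_cat chain_rev_cat.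
Qed.

Theorem sum_energy_permutations c s : uniq (c :: s) ->
  \sum_(t <- permutations (c :: s)) e (energy a x t) / chain alpha t =
  \sum_(t <- permutations s) zeta_prod (a c) (x c) t / chain_from alpha (alpha c) t.
Proof.
by case/andP=> cs s_uniq; rewrite sum_energy_insert // sum_zeta_prod ?(mem_map alpha_inj).
Qed.

End Identity.

Section PnTerm.
Variables (F : fieldType) (T : eqType) (e : F -> F) (a x : T -> F).

Definition slope (c : T) : F := a c / x c.

Definition Pn_term m (t : nat -> T) : F :=
  (\prod_(1 <= j < m) x (t j)) *
  (\prod_(0 <= j < m) zeta_of e ((\sum_(0 <= k < j.+1) a (t k)) * x (t j.+1)
                                - a (t j.+1) * (\sum_(0 <= k < j.+1) x (t k)))) /
  (\prod_(0 <= j < m) (a (t j) * x (t j.+1) - a (t j.+1) * x (t j))).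

Lemma zeta_prod_nth c0 p q s : zeta_prod e a x p q s =
  \prod_(0 <= j < size s) zeta_of e ((p + \sum_(0 <= k < j) a (nth c0 s k)) * x (nth c0 s j)
                                 - a (nth c0 s j) * (q + \sum_(0 <= k < j) x (nth c0 s k))).
Proof.
elim: s p q => [|d s IH] p q /=; first by rewrite big_geq.
rewrite big_nat_recl // IH; congr (_ * _); first by rewrite !big_geq // !addr0.
by apply: eq_big_nat => j _; rewrite !big_nat_recl //= !addrA.
Qed.

Lemma slope_inj : (forall c, x c != 0) ->
  (forall c d, c != d -> a c * x d - a d * x c != 0) -> injective slope.
Proof.
move=> x_neq0 ax_neq0 c d cd; apply/eqP; case: eqP => // /eqP /ax_neq0.
have -> : a c * x d - a d * x c = (slope c - slope d) * (x c * x d).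
  by rewrite /slope; field; rewrite !x_neq0.
by rewrite cd subrr mul0r eqxx.
Qed.

Lemma Pn_term_cons c0 c s : (forall d, x d != 0) -> s != [::] ->
  Pn_term (size s) (nth c0 (c :: s)) =
  (\prod_(d <- c :: s) x d)^-1 * (zeta_prod e a x (a c) (x c) s / chain slope (c :: s)).
Proof.
move=> x_neq0 s_nil; rewrite /Pn_term (chain_nth _ c0) [(size _).-1]/=.
set t := nth c0 (c :: s); set m := size s.
have m_gt0 : (0 < m)%N by rewrite lt0n size_eq0.
have -> : \prod_(0 <= j < m) zeta_of e ((\sum_(0 <= k < j.+1) a (t k)) * x (t j.+1)
                                - a (t j.+1) * (\sum_(0 <= k < j.+1) x (t k))) =
    zeta_prod e a x (a c) (x c) s.
  by rewrite (zeta_prod_nth c0); apply: eq_bigr => j _; rewrite !big_nat_recl.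
have -> : \prod_(0 <= j < m) (a (t j) * x (t j.+1) - a (t j.+1) * x (t j)) =
    \prod_(0 <= j < m) (slope (t j) - slope (t j.+1)) *
    (\prod_(0 <= j < m) x (t j) * \prod_(0 <= j < m) x (t j.+1)).
  by rewrite -!big_split; apply: eq_bigr => j _; rewrite /slope /=; field; rewrite !x_neq0.
have -> : \prod_(0 <= j < m) x (t j.+1) = \prod_(1 <= j < m) x (t j) * x (t m).
  by rewrite -(big_add1 _ _ 0 m.+1 xpredT (fun j => x (t j))) big_nat_recr.
have -> : \prod_(d <- c :: s) x d = \prod_(0 <= j < m) x (t j) * x (t m).
  by rewrite (big_nth c0) big_nat_recr.
set P := \prod_(1 <= j < m) x (t j); set X := \prod_(0 <= j < m) x (t j).
set D := \prod_(0 <= j < m) _.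
have P_neq0 : P != 0 by rewrite prodf_seq_neq0; apply/allP => j _; rewrite x_neq0.
by rewrite -[RHS]mul1r -(divff P_neq0) !invfM; ring.
Qed.

End PnTerm.

Lemma big_perm_enum (V : nmodType) N (G : seq 'I_N -> V) :
  \sum_(s : 'S_N) G (map s (enum 'I_N)) = \sum_(t <- permutations (enum 'I_N)) G t.
Proof.
rewrite -(big_map (fun s : 'S_N => map s (enum 'I_N)) xpredT G); apply: perm_big.
apply: uniq_perm; rewrite ?permutations_uniq //.
  rewrite map_inj_uniq ?index_enum_uniq // => s1 s2 /eq_in_map s12.
  by apply/permP => i; apply: s12; rewrite mem_enum.
move=> t; rewrite mem_permutations; apply/mapP/idP => [[s _ ->] | t_perm].
  apply: uniq_perm; rewrite ?enum_uniq ?(map_inj_uniq (@perm_inj _ s)) ?enum_uniq // => i.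
  by rewrite mem_enum -[i](permKV s) map_f ?mem_enum.
have /tuple_permP[s ->] : perm_eq t (ord_tuple N) by [].
by exists s; rewrite ?mem_index_enum //; apply: eq_map => i; rewrite /= tnth_ord_tuple.
Qed.

Lemma nth_map_enum_ord (T : Type) n (f : 'I_n.+1 -> T) k :
  nth (f ord0) (map f (enum 'I_n.+1)) k = f (inord k).
Proof.
have [kn | nk] := ltnP k n.+1.
  rewrite (nth_map ord0) ?size_enum_ord //; congr f.
  by apply: val_inj; rewrite /= nth_enum_ord ?inordK.
rewrite nth_default; last by rewrite size_map size_enum_ord.
congr f; apply: val_inj.
by rewrite /inord /insubd insubN // -leqNgt.
Qed.

Lemma PnE (R : realType) n (a x : 'I_n.+2 -> R) :
  Pn a x = \sum_(tau : 'S_n.+2 | tau ord0 == ord0) Pn_term expR a x n.+1 (fun k => tau (inord k)).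
Proof. by []. Qed.

Lemma Pn_zeta_prod (R : realType) n (a x : 'I_n.+1 -> R) : (forall i, x i != 0) ->
  Pn a x = (\prod_i x i)^-1 * \sum_(t <- permutations (behead (enum 'I_n.+1)))
    zeta_prod expR a x (a ord0) (x ord0) t / chain (slope a x) (ord0 :: t).
Proof.
case: n a x => [|n] a x x_neq0.
  by rewrite /Pn enum_ordSl enum_ord0 /= big_seq1 big_ord1 divr1 mulr1.
have enum_uniqS := enum_uniq 'I_n.+2; rewrite enum_ordSl in enum_uniqS.
pose G t := if head ord0 t == ord0 then Pn_term expR a x n.+1 (nth ord0 t) else 0.
have G_perm (tau : 'S_n.+2) : G (map tau (enum 'I_n.+2)) =
    if tau ord0 == ord0 then Pn_term expR a x n.+1 (fun k => tau (inord k)) else 0.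
  rewrite /G {1}enum_ordSl /=; case: eqP => // tau0; congr Pn_term.
  by apply: funext => k; rewrite -(nth_map_enum_ord tau) tau0.
rewrite PnE big_mkcond -(eq_bigr _ (fun tau _ => G_perm tau)) big_perm_enum.
rewrite -big_mkcond enum_ordSl big_permutations_head //= mulr_sumr.
apply: eq_big_seq => t; rewrite mem_permutations => t_perm.
have size_t : size t = n.+1 by rewrite (perm_size t_perm) size_map size_enum_ord.
have t_nil : t != [::] by rewrite -size_eq0 size_t.
rewrite -[X in Pn_term _ _ _ X]size_t Pn_term_cons //; congr (_^-1 * _).
by rewrite (perm_big (enum 'I_n.+2)) ?big_enum // enum_ordSl perm_cons.
Qed.

Lemma Prop31_rhs_energy (R : realType) n (a x : 'I_n.+1 -> R) :
  Prop31_rhs a x = (\prod_i x i)^-1 *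
    \sum_(t <- permutations (enum 'I_n.+1)) expR (energy a x t) / chain (slope a x) t.
Proof.
rewrite /Prop31_rhs -big_perm_enum; congr (_ * _); apply: eq_bigr => sigma _.
congr (expR _ / _).
  rewrite (energy_nth _ _ (sigma ord0)) size_map size_enum_ord big_mkord; apply: eq_bigr => i _.
  by rewrite big_mkord; apply: eq_bigr => j _; rewrite !nth_map_enum_ord !inord_val.
rewrite (chain_nth _ (sigma ord0)) size_map size_enum_ord /=; apply: eq_bigr => j _.
by rewrite !nth_map_enum_ord.
Qed.

Theorem proposition3p1 (R : realType) (n : nat) (a x : 'I_n.+1 -> R)
  (hx : forall i, x i != 0)
  (hax : forall i j, i != j -> a i * x j - a j * x i != 0) :
  Pn a x = Prop31_rhs a x.
Proof.
have enum_uniqS : uniq (ord0 :: map (lift ord0) (enum 'I_n)) by rewrite -enum_ordSl enum_uniq.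
rewrite Pn_zeta_prod // Prop31_rhs_energy enum_ordSl sum_energy_permutations //.
- by move=> u v; rewrite expRD.
- by move=> u; rewrite expR_eq0.
- exact: slope_inj.
Qed.
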